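(* Let $(X,\mu)$ be a $\sigma$-finite measure space and let $f,g\in L^1(X,\mu)$ be such that there exists $S\in S\mathcal{D}(L^1(X))$ with $f=Sg$. Then for every sublinear functional $\varphi:\mathbb{R}\to\mathbb{R}^+$, $$\int_X\varphi(f)\,d\mu\le\int_X\varphi(g)\,d\mu.$$
   Context: A sublinear functional $\varphi:\mathbb{R}\to\mathbb{R}^+$ is a convex and positively homogeneous map. $S\mathcal{D}(L^1(X))$ denotes the set of semi-doubly stochastic operators on $L^1(X)$: positive linear operators $T:L^1(X)\to L^1(X)$ with $\int_X Tf\,d\mu=\int_X f\,d\mu$ for all $f\in L^1(X)$ and $\int_X T^*\chi_E\,d\mu\le\mu(E)$ for every measurable $E$ with $\mu(E)<\infty$, where $T^*:L^\infty(X)\to L^\infty(X)$ is the Banach adjoint. *)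

From HB Require Import structures.
From mathcomp Require Import all_boot all_order all_algebra.
From mathcomp Require Import all_classical all_reals all_analysis.
Set Implicit Arguments. Unset Strict Implicit. Unset Printing Implicit Defensive.
Import Order.TTheory GRing.Theory Num.Theory.
Local Open Scope classical_set_scope.
Local Open Scope ring_scope.

(* Elements of L^1(X,mu) are represented by integrable representatives
   f : T -> R; equality in L^1 is equality mu-a.e. *)
Definition L1 d (T : measurableType d) (R : realType)
  (mu : {measure set T -> \bar R}) (f : T -> R) : Prop :=
  mu.-integrable setT (EFin \o f).

Definition Linfty d (T : measurableType d) (R : realType)
  (mu : {measure set T -> \bar R}) (h : T -> R) : Prop :=
  measurable_fun setT h /\ exists M : R, {ae mu, forall x, `|h x| <= M}.

(* An operator on L^1 given on representatives: it maps L^1 to L^1, is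
   well defined on a.e.-classes, and is linear (up to a.e. equality). *)
Definition L1_linear_operator d (T : measurableType d) (R : realType)
  (mu : {measure set T -> \bar R}) (S : (T -> R) -> (T -> R)) : Prop :=
  [/\ (forall f, L1 mu f -> L1 mu (S f)),
      (forall f1 f2, L1 mu f1 -> L1 mu f2 -> f1 = f2 %[ae mu] ->
         S f1 = S f2 %[ae mu]) &
      (forall (a : R) f1 f2, L1 mu f1 -> L1 mu f2 ->
         S (fun x => a * f1 x + f2 x) = (fun x => a * S f1 x + S f2 x) %[ae mu])].

(* h is (a representative of) the Banach adjoint S^* applied to u in L^infty:
   h in L^infty and  int (S^* u) f = int u (S f)  for all f in L^1. *)
Definition is_adjoint_image d (T : measurableType d) (R : realType)
  (mu : {measure set T -> \bar R}) (S : (T -> R) -> (T -> R)) (u h : T -> R) : Prop :=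
  Linfty mu h /\
  forall f, L1 mu f ->
    (\int[mu]_x (h x * f x)%:E = \int[mu]_x (u x * S f x)%:E)%E.

Definition semi_doubly_stochastic d (T : measurableType d) (R : realType)
  (mu : {measure set T -> \bar R}) (S : (T -> R) -> (T -> R)) : Prop :=
  [/\ L1_linear_operator mu S,
      (forall f, L1 mu f -> {ae mu, forall x, 0 <= f x} ->
         {ae mu, forall x, 0 <= S f x}),
      (forall f, L1 mu f ->
         (\int[mu]_x (S f x)%:E = \int[mu]_x (f x)%:E)%E) &
      (forall E, measurable E -> (mu E < +oo)%E ->
         forall h, is_adjoint_image mu S (\1_E) h ->
           (\int[mu]_x (h x)%:E <= mu E)%E)].

Definition sublinear_functional (R : realType) (phi : R -> R) : Prop :=
  [/\ (forall x, 0 <= phi x),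
      (forall (t x y : R), 0 <= t -> t <= 1 ->
         phi (t * x + (1 - t) * y) <= t * phi x + (1 - t) * phi y) &
      (forall (l x : R), 0 < l -> phi (l * x) = l * phi x)].

From HB Require Import structures.
From mathcomp Require Import all_boot all_order all_algebra.
From mathcomp Require Import all_classical all_reals all_analysis.
From mathcomp Require Import lra measurable_realfun.
Import Order.TTheory GRing.Theory Num.Theory.
Local Open Scope classical_set_scope.
Local Open Scope ring_scope.

(* A positively homogeneous phi satisfies phi x = phi 1 * x^+ + phi (-1) * x^-,
   so it suffices to show that the integrals of the positive and of the negative
   part do not increase under S. Splitting g = g^+ - g^-, positivity and linearity
   give f = S g^+ - S g^- a.e. with both terms nonnegative; hence f^+ <= S g^+
   and f^- <= S g^- a.e., and S preserves integrals. *)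

Lemma pos_homogeneousE {R : realDomainType} {phi : R -> R} :
  (forall l x, 0 < l -> phi (l * x) = l * phi x) ->
  forall x, phi x = phi 1 * Num.max x 0 + phi (-1) * Num.max (- x) 0.
Proof.
move=> phihom x.
have phi0 : phi 0 = 0 by have := phihom 2 0 (ltr0Sn _ 1); rewrite mulr0; lra.
have [x0|x0|->] := ltgtP x 0.
- have /max_idPl -> : 0 <= - x by rewrite oppr_ge0 ltW.
  rewrite mulr0 add0r mulrC.
  by have := phihom (- x) (-1); rewrite mulrN1 opprK oppr_gt0; apply.
- have /max_idPr -> : - x <= 0 by rewrite oppr_le0 ltW.
  rewrite mulr0 addr0 mulrC.
  by have := phihom x 1; rewrite mulr1; apply.
- by rewrite phi0 oppr0 maxxx !mulr0 addr0.
Qed.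

Lemma integral_pos_homogeneous_comp {d : measure_display} {T : measurableType d}
    {R : realType} (mu : {measure set T -> \bar R}) {phi : R -> R} :
  (forall l x, 0 < l -> phi (l * x) = l * phi x) ->
  0 <= phi 1 -> 0 <= phi (-1) -> forall h : T -> R, measurable_fun setT h ->
  (\int[mu]_x (phi (h x))%:E =
     (phi 1)%:E * \int[mu]_x (h^\+ x)%:E + (phi (-1))%:E * \int[mu]_x (h^\- x)%:E)%E.
Proof.
move=> phihom phi1 phiN1 h mh.
have mhp : measurable_fun setT (EFin \o h^\+).
  exact/measurable_EFinP/measurable_funrpos.
have mhn : measurable_fun setT (EFin \o h^\-).
  exact/measurable_EFinP/measurable_funrneg.
have -> : (fun x => (phi (h x))%:E) =
    (fun x => (phi 1)%:E * (h^\+ x)%:E + (phi (-1))%:E * (h^\- x)%:E)%E.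
  by apply/funext => x; rewrite (pos_homogeneousE phihom) EFinD !EFinM.
rewrite ge0_integralD //.
- by rewrite !ge0_integralZl // => x _; rewrite lee_fin.
- by move=> x _; rewrite -EFinM lee_fin mulr_ge0.
- exact: measurable_funeM.
- by move=> x _; rewrite -EFinM lee_fin mulr_ge0.
- exact: measurable_funeM.
Qed.

Section integral_decomposition_le.
Context {d : measure_display} {T : measurableType d} {R : realType}.
Variable mu : {measure set T -> \bar R}.

Lemma integral_funrpos_le {f P N : T -> R} :
  measurable_fun setT f -> measurable_fun setT P ->
  {ae mu, forall x, 0 <= P x} -> {ae mu, forall x, 0 <= N x} ->
  {ae mu, forall x, f x = P x - N x} ->
  (\int[mu]_x (f^\+ x)%:E <= \int[mu]_x (P x)%:E)%E.
Proof.
move=> mf mP P0 N0 fPN.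
have mEP : measurable_fun setT (EFin \o P) by exact/measurable_EFinP.
have mEPp : measurable_fun setT (EFin \o P^\+).
  exact/measurable_EFinP/measurable_funrpos.
rewrite (@ae_eq_integral _ _ _ mu setT (EFin \o P^\+) (EFin \o P)) //; last first.
  by apply: filterS P0 => x Px _ /=; rewrite /funrpos (max_idPl Px).
apply: ae_ge0_le_integral => //.
- by move=> x _; rewrite lee_fin.
- exact/measurable_EFinP/measurable_funrpos.
- by move=> x _; rewrite lee_fin.
apply: filterS2 N0 fPN => x Nx fx _; rewrite lee_fin le_max2 // fx.
by rewrite lerBlDr lerDl.
Qed.

Lemma integral_funrneg_le {f P N : T -> R} :
  measurable_fun setT f -> measurable_fun setT N ->
  {ae mu, forall x, 0 <= P x} -> {ae mu, forall x, 0 <= N x} ->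
  {ae mu, forall x, f x = P x - N x} ->
  (\int[mu]_x (f^\- x)%:E <= \int[mu]_x (N x)%:E)%E.
Proof.
move=> mf mN P0 N0 fPN; rewrite -funrposN.
apply: (integral_funrpos_le _ mN N0 P0); first exact: measurableT_comp.
by apply: filterS fPN => x /= ->; rewrite opprB.
Qed.

End integral_decomposition_le.

Section positive_integral_preserving_operator.
Context {d : measure_display} {T : measurableType d} {R : realType}.
Context {mu : {measure set T -> \bar R}} {S : (T -> R) -> (T -> R)}.
Hypothesis SL1 : forall f, L1 mu f -> L1 mu (S f).
Hypothesis Slin : forall (a : R) f1 f2, L1 mu f1 -> L1 mu f2 ->
  S (fun x => a * f1 x + f2 x) = (fun x => a * S f1 x + S f2 x) %[ae mu].
Hypothesis Spos : forall f, L1 mu f -> {ae mu, forall x, 0 <= f x} ->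
  {ae mu, forall x, 0 <= S f x}.
Hypothesis Sint : forall f, L1 mu f ->
  (\int[mu]_x (S f x)%:E = \int[mu]_x (f x)%:E)%E.
Context {f g : T -> R}.
Hypotheses (mf : measurable_fun setT f) (Lg : L1 mu g) (fSg : f = S g %[ae mu]).

Let Lgp : L1 mu g^\+. Proof. exact: integrable_funrpos. Qed.
Let Lgn : L1 mu g^\-. Proof. exact: integrable_funrneg. Qed.

Let mSgp : measurable_fun setT (S g^\+).
Proof. exact/measurable_EFinP/(measurable_int mu)/SL1. Qed.
Let mSgn : measurable_fun setT (S g^\-).
Proof. exact/measurable_EFinP/(measurable_int mu)/SL1. Qed.

Let Sgp0 : {ae mu, forall x, 0 <= S g^\+ x}.
Proof. by apply: Spos => //; apply: aeW. Qed.
Let Sgn0 : {ae mu, forall x, 0 <= S g^\- x}.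
Proof. by apply: Spos => //; apply: aeW. Qed.

Let fE : {ae mu, forall x, f x = S g^\+ x - S g^\- x}.
Proof.
have gE : (fun x => -1 * g^\- x + g^\+ x) = g.
  apply/funext => x; rewrite mulN1r addrC.
  exact: (congr1 (@^~ x) (funrposBneg g)).
have := Slin (-1) _ _ Lgn Lgp; rewrite gE => Sg.
by apply: filterS2 fSg Sg => x -> // -> //; rewrite mulN1r addrC.
Qed.

Lemma integral_op_funrpos_le : (\int[mu]_x (f^\+ x)%:E <= \int[mu]_x (g^\+ x)%:E)%E.
Proof. by rewrite -(Sint _ Lgp); exact: integral_funrpos_le mf mSgp Sgp0 Sgn0 fE. Qed.

Lemma integral_op_funrneg_le : (\int[mu]_x (f^\- x)%:E <= \int[mu]_x (g^\- x)%:E)%E.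
Proof. by rewrite -(Sint _ Lgn); exact: integral_funrneg_le mf mSgn Sgp0 Sgn0 fE. Qed.

End positive_integral_preserving_operator.

Theorem corollary4p2 (d : measure_display) (T : measurableType d) (R : realType)
  (mu : {measure set T -> \bar R}) (f g : T -> R) :
  sigma_finite setT mu ->
  L1 mu f -> L1 mu g ->
  (exists S, semi_doubly_stochastic mu S /\ f = S g %[ae mu]) ->
  forall phi : R -> R, sublinear_functional phi ->
    (\int[mu]_x (phi (f x))%:E <= \int[mu]_x (phi (g x))%:E)%E.
Proof.
move=> _ Lf Lg [S [[[SL1 _ Slin] Spos Sint _] fSg]] phi [phi_ge0 _ phihom].
have mf : measurable_fun setT f by exact/measurable_EFinP/(measurable_int mu).
have mg : measurable_fun setT g by exact/measurable_EFinP/(measurable_int mu).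
rewrite !(integral_pos_homogeneous_comp mu phihom (phi_ge0 1) (phi_ge0 (-1))) //.
apply: leeD; apply: lee_wpmul2l; rewrite ?lee_fin //.
- exact: (integral_op_funrpos_le SL1 Slin Spos Sint mf Lg fSg).
- exact: (integral_op_funrneg_le SL1 Slin Spos Sint mf Lg fSg).
Qed.
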